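(* Let $n\ge3$ be odd and write $c_j=\cos(2\pi j/n)$. Then $$Su_2:=\frac32\sum_{j=0}^{\lfloor n/4\rfloor}\ \sum_{k=\lceil n/4\rceil}^{(n-1)/2}\frac{1}{|c_j-c_k+1|}\ \le\ \frac{3}{32}\,n^2.$$
   Context: No additional context beyond the notation $c_j=\cos(2\pi j/n)$. *)

From Stdlib Require Import Reals Lra Lia List.
Open Scope R_scope.

(* sum_{i=a}^{b} f i  (empty if b < a) *)
Definition sumR (a b : nat) (f : nat -> R) : R :=
  fold_right Rplus 0 (map f (List.seq a (S b - a))).

Definition cj (n j : nat) : R := cos (2 * PI * INR j / INR n).

Definition Su2 (n : nat) : R :=
  3 / 2 * sumR 0 (Nat.div n 4)
    (fun j => sumR (Nat.div (n + 3) 4) (Nat.div (n - 1) 2)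
       (fun k => 1 / Rabs (cj n j - cj n k + 1))).

(* Every index pair in the sum has [4j < n < 4k] and [2k < n], so [2 pi j/n] and
   [2 pi k/n] stay at least [pi/(2n)] away from [pi/2] on either side: hence
   [c_j >= sin(pi/(2n))] and [c_k <= -sin(pi/(2n))], and each denominator is at
   least [1 + 2 sin(pi/(2n)) >= 1 + 5/(2n)].  Multiplying the resulting uniform
   bound [2n/(2n+5)] by the number of terms, which is [(m+1) m] for [n = 4m+1]
   and [(m+1)^2] for [n = 4m+3], gives at most [n^2/16]. *)
From Stdlib Require Import Reals Lra Lia List.
Open Scope R_scope.

Lemma sum_map_le_const {A : Type} (f : A -> R) (c : R) (l : list A) :
  (forall x, In x l -> f x <= c) ->
  fold_right Rplus 0 (map f l) <= INR (length l) * c.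
Proof.
  induction l as [|x l IH]; intros Hf; cbn [map fold_right length].
  - simpl; lra.
  - rewrite S_INR.
    assert (Hx : f x <= c) by (apply Hf; left; reflexivity).
    assert (Hl := IH (fun y Hy => Hf y (or_intror Hy))).
    lra.
Qed.

Lemma sumR_le_const (a b : nat) (f : nat -> R) (c : R) :
  (forall i, (a <= i <= b)%nat -> f i <= c) -> sumR a b f <= INR (S b - a) * c.
Proof.
  intros Hf; unfold sumR.
  rewrite <- (length_seq (S b - a) a) at 2.
  apply sum_map_le_const; intros i Hi; apply in_seq in Hi; apply Hf; lia.
Qed.

(* From the Taylor lower bound [x - x^3/6 + x^5/120 - x^7/5040] provided by [SIN]. *)
Lemma sin_ge_9_10 (x : R) : 0 <= x -> x <= 2/3 -> 9/10 * x <= sin x.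
Proof.
  intros Hx0 Hx1; assert (Hpi := PI2_3_2).
  destruct (SIN x Hx0 ltac:(lra)) as [Hlb _].
  eapply Rle_trans; [|exact Hlb].
  unfold sin_lb, sin_approx, sin_term; simpl.
  assert (0 <= x^2 <= 4/9) by (split; nra).
  assert (0 <= x^4 <= 1) by (split; nra).
  assert (0 <= x^6 <= 1) by (split; nra).
  simpl; nra.
Qed.

Lemma sin_half_step_ge (n : R) : 3 <= n -> 5 / (4 * n) <= sin (PI / (2 * n)).
Proof.
  intros Hn; assert (Hpi_lb := PI2_3_2); assert (Hpi_ub := PI_4).
  assert (H0 : 0 <= PI / (2 * n)) by (left; apply Rdiv_lt_0_compat; lra).
  assert (H1 : PI / (2 * n) <= 2/3).
  { apply Rmult_le_reg_r with (2 * n); [lra|]. field_simplify; lra. }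
  assert (Hlin : 5 / (4 * n) <= 9/10 * (PI / (2 * n))).
  { apply Rmult_le_reg_r with (4 * n); [lra|]. field_simplify; lra. }
  assert (Hsin := sin_ge_9_10 _ H0 H1).
  lra.
Qed.

Lemma sin_half_step_le (n m : R) :
  1 <= m <= n -> sin (PI / (2 * n)) <= sin (PI * m / (2 * n)).
Proof.
  intros Hm; assert (Hpi := PI_RGT_0).
  apply sin_incr_1.
  - assert (0 < PI / (2 * n)) by (apply Rdiv_lt_0_compat; lra); lra.
  - apply Rmult_le_reg_r with (2 * n); [lra|]. field_simplify; nra.
  - assert (0 < PI * m / (2 * n)) by (apply Rdiv_lt_0_compat; nra); lra.
  - apply Rmult_le_reg_r with (2 * n); [lra|]. field_simplify; nra.
  - apply Rmult_le_reg_r with (2 * n); [lra|]. field_simplify; nra.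
Qed.

Lemma cj_eq_sin (n j : nat) :
  (0 < n)%nat -> cj n j = sin (PI * (INR n - 4 * INR j) / (2 * INR n)).
Proof.
  intros Hn; apply lt_0_INR in Hn; unfold cj.
  rewrite <- sin_shift; f_equal; field; lra.
Qed.

Lemma cj_ge_sin_half_step (n j : nat) :
  (4 * j < n)%nat -> sin (PI / (2 * INR n)) <= cj n j.
Proof.
  intros Hj; rewrite cj_eq_sin by lia.
  apply sin_half_step_le.
  assert (Hj1 : (4 * j + 1 <= n)%nat) by lia.
  apply le_INR in Hj1; rewrite plus_INR, mult_INR in Hj1; simpl INR in Hj1.
  assert (0 <= INR j) by apply pos_INR.
  lra.
Qed.

Lemma cj_le_neg_sin_half_step (n k : nat) :
  (n < 4 * k)%nat -> (2 * k < n)%nat -> cj n k <= - sin (PI / (2 * INR n)).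
Proof.
  intros Hk Hk2; rewrite cj_eq_sin by lia.
  assert (Hk1 : (n + 1 <= 4 * k)%nat) by lia.
  apply le_INR in Hk1; rewrite plus_INR, mult_INR in Hk1; simpl INR in Hk1.
  apply lt_INR in Hk2; rewrite mult_INR in Hk2; simpl INR in Hk2.
  replace (PI * (INR n - 4 * INR k) / (2 * INR n))
    with (- (PI * (4 * INR k - INR n) / (2 * INR n))) by (field; lra).
  rewrite sin_neg; apply Ropp_le_contravar, sin_half_step_le; lra.
Qed.

Lemma Su2_term_le (n j k : nat) :
  (3 <= n)%nat -> (4 * j < n)%nat -> (n < 4 * k)%nat -> (2 * k < n)%nat ->
  1 / Rabs (cj n j - cj n k + 1) <= 2 * INR n / (2 * INR n + 5).
Proof.
  intros Hn Hj Hk Hk2.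
  assert (Hn3 : 3 <= INR n) by (apply le_INR in Hn; simpl in Hn; lra).
  assert (Hcj := cj_ge_sin_half_step n j Hj).
  assert (Hck := cj_le_neg_sin_half_step n k Hk Hk2).
  assert (Hs := sin_half_step_ge (INR n) Hn3).
  assert (Hden : (2 * INR n + 5) / (2 * INR n) <= cj n j - cj n k + 1).
  { replace ((2 * INR n + 5) / (2 * INR n)) with (1 + 2 * (5 / (4 * INR n)))
      by (field; lra).
    lra. }
  assert (Hpos : 0 < (2 * INR n + 5) / (2 * INR n)) by (apply Rdiv_lt_0_compat; lra).
  rewrite Rabs_right by lra.
  replace (2 * INR n / (2 * INR n + 5)) with (1 / ((2 * INR n + 5) / (2 * INR n)))
    by (field; lra).
  apply Rmult_le_compat_l; [lra|].
  apply Rinv_le_contravar; lra.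
Qed.

Lemma odd_quarter_cases (n : nat) : Nat.Odd n -> exists m,
  (Nat.div n 4 = m /\ Nat.div (n + 3) 4 = S m) /\
  ((n = 4 * m + 1 /\ Nat.div (n - 1) 2 = 2 * m) \/
   (n = 4 * m + 3 /\ Nat.div (n - 1) 2 = 2 * m + 1))%nat.
Proof.
  intros [p Hp]; exists (Nat.div p 2).
  pose proof (Nat.div_mod p 2 ltac:(lia)); pose proof (Nat.mod_upper_bound p 2 ltac:(lia)).
  pose proof (Nat.div_mod n 4 ltac:(lia)); pose proof (Nat.mod_upper_bound n 4 ltac:(lia)).
  pose proof (Nat.div_mod (n + 3) 4 ltac:(lia)); pose proof (Nat.mod_upper_bound (n + 3) 4 ltac:(lia)).
  pose proof (Nat.div_mod (n - 1) 2 ltac:(lia)); pose proof (Nat.mod_upper_bound (n - 1) 2 ltac:(lia)).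
  lia.
Qed.

Lemma Su2_count_le (n : nat) : Nat.Odd n ->
  (32 * ((S (Nat.div n 4) - 0) * (S (Nat.div (n - 1) 2) - Nat.div (n + 3) 4))
     <= n * (2 * n + 5))%nat.
Proof.
  intros Hodd; destruct (odd_quarter_cases n Hodd) as [m [[-> ->] [[-> ->]|[-> ->]]]];
    nia.
Qed.

Theorem mainTheorem5 (n : nat) (hn : (3 <= n)%nat) (hodd : Nat.Odd n) :
  Su2 n <= 3 / 32 * INR n ^ 2.
Proof.
  assert (Hn3 : 3 <= INR n) by (apply le_INR in hn; simpl in hn; lra).
  set (t := 2 * INR n / (2 * INR n + 5)).
  set (J := (S (Nat.div n 4) - 0)%nat).
  set (K := (S (Nat.div (n - 1) 2) - Nat.div (n + 3) 4)%nat).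
  assert (Hsum : sumR 0 (Nat.div n 4)
      (fun j => sumR (Nat.div (n + 3) 4) (Nat.div (n - 1) 2)
         (fun k => 1 / Rabs (cj n j - cj n k + 1))) <= INR J * (INR K * t)).
  { apply sumR_le_const; intros j Hj; apply sumR_le_const; intros k Hk.
    destruct (odd_quarter_cases n hodd) as [m [[Ej Ek] Hcases]].
    apply Su2_term_le; lia. }
  assert (Hcount := Su2_count_le n hodd); fold J K in Hcount.
  apply le_INR in Hcount; rewrite !mult_INR, plus_INR, mult_INR in Hcount.
  replace (INR 32) with 32 in Hcount by (simpl; lra).
  replace (INR 2) with 2 in Hcount by (simpl; lra).
  replace (INR 5) with 5 in Hcount by (simpl; lra).
  assert (HJ := pos_INR J); assert (HK := pos_INR K).
  assert (HJKt : INR J * (INR K * t) <= 1 / 16 * INR n ^ 2).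
  { unfold t; apply Rmult_le_reg_r with (2 * INR n + 5); [lra|].
    field_simplify; [nra|lra]. }
  unfold Su2; lra.
Qed.
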